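(* Every $P_2$-irreducible tree $T$ is of one of the following forms: (1) $K_1$; (2) $P_2$ (a single edge); (3) a star $K_{1,n}$ with $n\geq 3$; (4) a tree containing at least two distinct vertices each of which is adjacent to at least two leaves.
   Context: A graph has a pendant $P_2$ if it contains distinct vertices $a,b,w$ such that $a$ has degree $1$ and is adjacent to $b$, and $b$ has degree $2$ with neighbors exactly $a$ and $w$ (i.e., a path on two vertices $a,b$ attached to the rest of the graph by the single edge $bw$). A graph is $P_2$-irreducible if it has no pendant $P_2$. A leaf is a vertex of degree $1$. *)

From mathcomp Require Import all_boot.
Set Implicit Arguments. Unset Strict Implicit. Unset Printing Implicit Defensive.

Definition simple_graph (T : finType) (e : rel T) : Prop :=
  symmetric e /\ irreflexive e.

Definition deg (T : finType) (e : rel T) (x : T) : nat := #|[set y | e x y]|.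

Definition leaf (T : finType) (e : rel T) (x : T) : bool := deg e x == 1.

Definition is_cycle (T : finType) (e : rel T) (s : seq T) : bool :=
  [&& 3 <= size s, uniq s & cycle e s].

Definition connected (T : finType) (e : rel T) : Prop :=
  forall x y : T, connect e x y.

Definition acyclic (T : finType) (e : rel T) : Prop :=
  forall s : seq T, ~~ is_cycle e s.

Definition is_tree (T : finType) (e : rel T) : Prop :=
  [/\ simple_graph e, 0 < #|T|, connected e & acyclic e].

Definition has_pendant_P2 (T : finType) (e : rel T) : Prop :=
  exists a b w : T,
    [/\ [&& a != b, b != w & a != w],
        deg e a = 1, e a b, deg e b = 2 & e b a && e b w].

Definition P2_irreducible (T : finType) (e : rel T) : Prop :=
  ~ has_pendant_P2 e.

Definition is_K1 (T : finType) (e : rel T) : Prop := #|T| = 1.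

Definition is_P2 (T : finType) (e : rel T) : Prop :=
  exists a b : T, [/\ a != b, e a b & forall x, (x == a) || (x == b)].

Definition is_star (T : finType) (e : rel T) (n : nat) : Prop :=
  #|T| = n.+1 /\
  exists c : T, forall x y : T,
    e x y = ((x == c) && (y != c)) || ((y == c) && (x != c)).

Definition two_leaf_nbrs (T : finType) (e : rel T) (x : T) : bool :=
  2 <= #|[set y | e x y && leaf e y]|.

From mathcomp Require Import all_boot zify.

Set Implicit Arguments. Unset Strict Implicit. Unset Printing Implicit Defensive.

(* Take a longest path x0 x1 ... xk. By maximality and acyclicity both ends
   are leaves, and so is every neighbour of x1 other than x2 (it could
   replace x0). If k >= 2, x1 has degree at least 2, and degree exactly 2
   would make x0 x1 a pendant P2 attached at x2; hence x1, and symmetrically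
   x(k-1), is adjacent to at least two leaves. Then k = 1 gives P2, k = 2 a
   star centred at x1, and k >= 3 the two distinct vertices x1 and x(k-1). *)

Section Trees.

Variables (T : finType) (e : rel T).
Hypotheses (sym_e : symmetric e) (irr_e : irreflexive e).

Lemma leaf_nbr_unique z x y : leaf e z -> e z x -> e z y -> y = x.
Proof.
move=> /cards1P[w nbr_z] e_zx e_zy.
have nbr_eq v : e z v -> v = w by move=> e_zv; apply/set1P; rewrite -nbr_z inE.
by rewrite (nbr_eq _ e_zx) (nbr_eq _ e_zy).
Qed.

Hypothesis con_e : connected e.

Lemma connected_closed_set (A : {set T}) x :
  x \in A -> (forall y z, y \in A -> e y z -> z \in A) -> forall y, y \in A.
Proof.
move=> Ax clA y; have clA' : closed e (mem A).
  by apply: (intro_closed (sym_connect_sym sym_e)) => u v e_uv Au; apply: clA Au e_uv.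
by rewrite -(closed_connect clA' (con_e x y)).
Qed.

Lemma leaf_edge_P2 x y : e x y -> leaf e x -> leaf e y -> is_P2 e.
Proof.
move=> e_xy leaf_x leaf_y; exists x, y; split=> // [|z].
  by apply: contraTneq e_xy => ->; rewrite irr_e.
rewrite -in_set2; apply: (connected_closed_set (x := x)) => [|u v]; first exact: set21.
case/set2P=> -> e_uv; first by rewrite (leaf_nbr_unique leaf_x e_xy e_uv) set22.
have e_yx : e y x by rewrite sym_e.
by rewrite (leaf_nbr_unique leaf_y e_yx e_uv) set21.
Qed.

Lemma star_of_leaf_nbrs c : (forall y, e c y -> leaf e y) -> is_star e (deg e c).
Proof.
move=> leaf_nbr.
have all_c : forall y, y \in c |: [set y | e c y].
  apply: (connected_closed_set (x := c)) => [|y z]; first exact: setU11.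
  rewrite !inE => /predU1P[-> -> | e_cy e_yz]; first by rewrite orbT.
  by rewrite (leaf_nbr_unique (leaf_nbr _ e_cy) (_ : e y c) e_yz) ?eqxx // sym_e.
split.
  have -> : #|T| = #|c |: [set y | e c y]| by apply: eq_card => y; rewrite all_c.
  by rewrite cardsU1 inE irr_e.
exists c => x y; have [-> | x_c] := eqVneq x c.
  have [-> | y_c] := eqVneq y c; first by rewrite irr_e.
  by have := all_c y; rewrite !inE (negbTE y_c).
have e_cx : e c x by have := all_c x; rewrite !inE (negbTE x_c).
rewrite andbT /=; apply/idP/eqP => [e_xy | ->]; last by rewrite sym_e.
by rewrite (leaf_nbr_unique (leaf_nbr _ e_cx) (_ : e x c) e_xy) // sym_e.
Qed.

Hypothesis acyc_e : acyclic e.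

Definition simple_path (s : seq T) : bool :=
  if s is x :: p then uniq s && path e x p else false.

Definition longest_path (s : seq T) : Prop :=
  simple_path s /\ forall t, simple_path t -> size t <= size s.

Lemma simple_path_uniq s : simple_path s -> uniq s.
Proof. by case: s => // x p /andP[]. Qed.

Lemma simple_path_edge x y : e x y -> simple_path [:: x; y].
Proof.
move=> e_xy; rewrite /= inE e_xy !andbT.
by apply: contraTneq e_xy => ->; rewrite irr_e.
Qed.

Lemma simple_path_rev s : simple_path s -> simple_path (rev s).
Proof.
case: s => // x p /andP[uniq_s path_s]; rewrite lastI rev_rcons; apply/andP; split.
  by rewrite -rev_rcons -lastI rev_uniq.
by rewrite rev_path (@eq_path _ _ e) // => y z; rewrite /= sym_e.
Qed.

Lemma exists_longest_path s0 : simple_path s0 -> exists s, longest_path s.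
Proof.
move=> path_s0; pose P n := [exists t : n.-tuple T, simple_path t].
have exP : exists n, P n by exists (size s0); apply/existsP; exists (in_tuple s0).
have ubP n : P n -> n <= #|T|.
  case/existsP=> t /simple_path_uniq /card_uniqP; rewrite size_tuple => <-.
  exact: max_card.
case: (ex_maxnP exP ubP) => n /existsP[s path_s] max_n.
exists s; split=> // t path_t; rewrite size_tuple.
by apply: max_n; apply/existsP; exists (in_tuple t).
Qed.

Lemma longest_path_rev s : longest_path s -> longest_path (rev s).
Proof.
case=> path_s max_s; split=> [|t]; first exact: simple_path_rev.
by rewrite size_rev; apply: max_s.
Qed.

Lemma acyclic_closing_edge x p y : simple_path (x :: rcons p y) -> e y x -> p = [::].
Proof.
case: p => // z p /andP[uniq_s path_s] e_yx; case/negP: (acyc_e (x :: rcons (z :: p) y)).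
by rewrite /is_cycle uniq_s /= size_rcons rcons_path last_rcons e_yx andbT; exact: path_s.
Qed.

Lemma simple_path_nbr x p y :
  simple_path (x :: p) -> e x y -> y \in p -> exists q, p = y :: q.
Proof.
move=> /andP[uniq_s path_s] e_xy /splitPr def_p; case: def_p uniq_s path_s => p1 p2.
rewrite -cat_rcons -cat_cons cat_uniq cat_path => /andP[uniq1 _] /andP[path1 _].
have e_yx : e y x by rewrite sym_e.
have -> : p1 = [::] by apply: acyclic_closing_edge e_yx; apply/andP; split.
by exists p2.
Qed.

Lemma longest_path_nbr x p y : longest_path (x :: p) -> e x y -> exists q, p = y :: q.
Proof.
move=> [path_s max_s] e_xy; have [y_in | y_notin] := boolP (y \in p).
  exact: simple_path_nbr path_s e_xy y_in.
have y_x : y != x by apply: contraTneq e_xy => ->; rewrite irr_e.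
have path_ys : simple_path [:: y, x & p].
  case/andP: path_s => uniq_s path_s.
  apply/andP; split; first by rewrite cons_uniq inE negb_or y_x y_notin uniq_s.
  by rewrite /= sym_e e_xy path_s.
by have := max_s _ path_ys; rewrite ltnn.
Qed.

Lemma longest_path_head_leaf x y q : longest_path [:: x, y & q] -> leaf e x.
Proof.
move=> long_s; rewrite /leaf /deg (_ : [set z | e x z] = [set y]) ?cards1 //.
apply/setP=> z; rewrite !inE; apply/idP/eqP => [e_xz | ->].
  by have [q' [-> _]] := longest_path_nbr long_s e_xz.
by case: long_s => /andP[_ /andP[]].
Qed.

Lemma longest_path_second_nbr_leaf x0 x1 x2 r y :
  longest_path [:: x0, x1, x2 & r] -> e x1 y -> y != x2 -> leaf e y.
Proof.
move=> long_s e_x1y y_x2; have [-> | y_x0] := eqVneq y x0.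
  exact: longest_path_head_leaf long_s.
case: (long_s) => /andP[/andP[_ uniq_s] /andP[_ path_s]] max_s.
have path_x1 : simple_path [:: x1, x2 & r] by rewrite /= uniq_s path_s.
have y_notin : y \notin x2 :: r.
  apply/negP => /(simple_path_nbr path_x1 e_x1y)[q [x2_y _]].
  by rewrite x2_y eqxx in y_x2.
have y_x1 : y != x1 by apply: contraTneq e_x1y => ->; rewrite irr_e.
have path_y : simple_path [:: y, x1, x2 & r].
  by rewrite /= inE negb_or y_x1 y_notin uniq_s sym_e e_x1y path_s.
by apply: (@longest_path_head_leaf y x1 (x2 :: r)); split=> // t /max_s.
Qed.

Lemma longest_path2_P2 x0 x1 : longest_path [:: x0; x1] -> is_P2 e.
Proof.
move=> long_s; case: (long_s) => /andP[_ /andP[e_x0x1 _]] _.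
apply: leaf_edge_P2 e_x0x1 _ _; first exact: longest_path_head_leaf long_s.
exact: longest_path_head_leaf (longest_path_rev long_s).
Qed.

Hypothesis irred_e : P2_irreducible e.

Lemma longest_path_deg_second x0 x1 x2 r :
  longest_path [:: x0, x1, x2 & r] -> 3 <= deg e x1.
Proof.
move=> long_s; case: (long_s) => /andP[uniq_s /and3P[e_x0x1 e_x1x2 _]] _.
move: uniq_s; rewrite /= !inE !negb_or.
case/andP=> /and3P[x0_x1 x0_x2 _] /andP[/andP[x1_x2 _] _].
have deg_ge2 : 2 <= deg e x1.
  have <- : #|[set x0; x2]| = 2 by rewrite cards2 x0_x2.
  by apply/subset_leq_card/subsetP => z; rewrite !inE => /orP[] /eqP ->; rewrite // sym_e.
have deg_neq2 : deg e x1 != 2.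
  apply/eqP => deg2; apply: irred_e; exists x0, x1, x2; split=> //.
  - by rewrite x0_x1 x1_x2 x0_x2.
  - exact/eqP/(longest_path_head_leaf long_s).
  - by rewrite sym_e e_x0x1 e_x1x2.
by rewrite ltn_neqAle eq_sym deg_neq2.
Qed.

Lemma longest_path_two_leaf_nbrs s x :
  longest_path s -> 2 < size s -> two_leaf_nbrs e (nth x s 1).
Proof.
case: s => [|x0 [|x1 [|x2 r]]] // long_s _; rewrite /two_leaf_nbrs /=.
have e_x1x2 : e x1 x2 by case: long_s => /andP[_ /and3P[]].
apply: leq_trans (_ : #|[set y | e x1 y] :\ x2| <= _).
  by have := longest_path_deg_second long_s; rewrite /deg (cardsD1 x2) inE e_x1x2.
apply/subset_leq_card/subsetP => y; rewrite !inE => /andP[y_x2 e_x1y].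
by rewrite e_x1y (longest_path_second_nbr_leaf long_s e_x1y y_x2).
Qed.

Lemma longest_path3_star x0 x1 x2 :
  longest_path [:: x0; x1; x2] -> exists n, 3 <= n /\ is_star e n.
Proof.
move=> long_s; exists (deg e x1); split; first exact: longest_path_deg_second long_s.
apply: star_of_leaf_nbrs => y e_x1y; have [-> | y_x2] := eqVneq y x2.
  exact: longest_path_head_leaf (longest_path_rev long_s).
exact: longest_path_second_nbr_leaf long_s e_x1y y_x2.
Qed.

Lemma longest_path_two_centres x s : longest_path (x :: s) -> 2 < size s ->
  exists u v, [/\ u != v, two_leaf_nbrs e u & two_leaf_nbrs e v].
Proof.
move=> long_s size_s; set s' := x :: s.
exists (nth x s' 1), (nth x s' (size s' - 2)); split.
- by rewrite nth_uniq ?(simple_path_uniq long_s.1) /=; lia.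
- by apply: longest_path_two_leaf_nbrs long_s _ => /=; lia.
- rewrite -nth_rev /=; last lia.
  apply: longest_path_two_leaf_nbrs (longest_path_rev long_s) _.
  by rewrite size_rev /=; lia.
Qed.

End Trees.

Theorem lemma1 (T : finType) (e : rel T) :
  is_tree e -> P2_irreducible e ->
  [\/ is_K1 e,
      is_P2 e,
      (exists n : nat, 3 <= n /\ is_star e n)
    | exists u v : T, [/\ u != v, two_leaf_nbrs e u & two_leaf_nbrs e v]].
Proof.
move=> [[sym_e irr_e] T_gt0 con_e acyc_e] irred_e.
have [T_le1 | /card_gt1P[a [b [_ _ a_b]]]] := leqP #|T| 1.
  by apply: Or41; apply/anti_leq; rewrite T_le1 T_gt0.
have [c e_ac] : exists c, e a c.
  case/connectP: (con_e a b) => [[|c p] /= path_ab b_def].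
    by rewrite b_def eqxx in a_b.
  by exists c; case/andP: path_ab.
have path_ac := simple_path_edge irr_e e_ac.
have [s long_s] := exists_longest_path path_ac.
have size_s := long_s.2 _ path_ac.
case: s long_s size_s => [|x0 [|x1 [|x2 [|x3 r]]]] // long_s _.
- by apply: Or42; apply: longest_path2_P2 long_s.
- by apply: Or43; apply: longest_path3_star long_s.
- by apply: Or44; apply: longest_path_two_centres long_s _.
Qed.
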